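(* For every connected finite simple graph $\Gamma$ on vertex set $[n]$, $n\ge1$, $$F_\Gamma=\sum_{i\in[n]}\big(F_{\Gamma\setminus\{i\}}\big)_1,$$ where $\Gamma\setminus\{i\}$ is the induced subgraph on $[n]\setminus\{i\}$.
   Context: For a coloring $\lambda:V\to\mathbb{N}=\{1,2,\dots\}$ of a finite simple graph $\Gamma$ with values $i_1<\dots<i_k$, let $I_j=\lambda^{-1}(\{i_1,\dots,i_j\})$, $I_0=\emptyset$. It is ordered if for each $j$, no two distinct vertices $u,w$ with $\lambda(u)=\lambda(w)=i_j$ are joined by a path in $\Gamma$ (possibly a single edge) all of whose internal vertices lie in $I_{j-1}$. $F_\Gamma=\sum_{\lambda\text{ ordered}}\prod_{v\in V}x_{\lambda(v)}$, with $F_\Gamma=1$ for the graph with no vertices (it equals the lattice point enumerator of the graph-associahedron of $\Gamma$). For a composition $\alpha=(a_1,\dots,a_k)$, $M_\alpha=\sum_{i_1<\dots<i_k}x_{i_1}^{a_1}\cdots x_{i_k}^{a_k}$, $M_{()}=1$. The shifting operator $G\mapsto(G)_1$ on quasisymmetric functions is the linear map with $(M_{(a_1,\dots,a_k)})_1=M_{(a_1,\dots,a_k,1)}$. *)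

From mathcomp Require Import all_boot.
Set Implicit Arguments. Unset Strict Implicit. Unset Printing Implicit Defensive.

(* A formal power series in x_1, x_2, ... with nat coefficients is represented
   by its coefficient function on monomials.  A monomial is an exponent list
   beta : seq nat, where nth 0 beta j is the exponent of x_(j+1)
   (trailing zeros are irrelevant for all series below). *)
Definition series := seq nat -> nat.

(* A coloring lam : T -> nat (the nat value c stands for the color c+1).
   [lower e lam u] is the set I_{j-1} of vertices of color < lam u. *)
Definition lower_rel (T : finType) (e : rel T) (lam : T -> nat) (c : nat) : rel T :=
  [rel a b | [&& lam a < c, lam b < c & e a b]].

Definition low_path (T : finType) (e : rel T) (lam : T -> nat) (c : nat) (u w : T) : bool :=
  e u w ||
  [exists x, exists y,
     [&& lam x < c, lam y < c, e u x, e y w & connect (lower_rel e lam c) x y]].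

Definition ordered_col (T : finType) (e : rel T) (lam : T -> nat) : bool :=
  [forall u, forall w,
     ((u != w) && (lam u == lam w)) ==> ~~ low_path e lam (lam u) u w].

(* Coefficient of x^beta in F_Gamma: the number of ordered colorings whose
   colour-class sizes are given by beta (colours beyond size beta would give
   a nonzero exponent, so they range over 'I_(size beta)). *)
Definition F_graph (T : finType) (e : rel T) : series := fun beta =>
  #|[set lam : {ffun T -> 'I_(size beta)} |
       ordered_col e (fun v => nat_of_ord (lam v)) &&
       [forall j : 'I_(size beta), #|[set v | lam v == j]| == nth 0 beta j]]|.

(* The shifting operator G |-> (G)_1, (M_alpha)_1 = M_(alpha,1), expressed on
   coefficients of a quasisymmetric G: the coefficient of x^beta in (G)_1,
   where the nonzero exponents of beta in order are (b_1,...,b_m), is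
   [b_m = 1] * (coefficient of x_1^b_1 ... x_(m-1)^b_(m-1) in G). *)
Definition shift1 (G : series) : series := fun beta =>
  let s := [seq a <- beta | a != 0] in
  if (s != [::]) && (last 0 s == 1) then G (take (size s).-1 s) else 0.

Definition del_vertex n (i : 'I_n) := {v : 'I_n | v != i}.
Definition del_rel n (e : rel 'I_n) (i : 'I_n) : rel (del_vertex i) :=
  fun a b => e (val a) (val b).
Arguments del_rel {n} e i _ _.

From mathcomp Require Import all_boot.
Set Implicit Arguments. Unset Strict Implicit. Unset Printing Implicit Defensive.

(* Zero exponents can be deleted from beta without changing the coefficient, so
   only the nonzero parts (b_1, ..., b_m) of beta matter.  In an ordered
   coloring of a connected graph the top colour class is a single vertex: a
   path between two top-coloured vertices contains a segment between two of
   them with all internal vertices of lower colour.  Hence the coefficient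
   vanishes unless b_m = 1, and the ordered colorings whose top vertex is i are
   exactly the ordered colorings of Gamma \ {i} with parts (b_1, ..., b_(m-1))
   extended by the top colour at i: a vertex of strictly maximal colour is
   never an internal vertex of a low path. *)

Lemma connect_exit (T : finType) (e : rel T) (A : {pred T}) x y :
  connect e x y -> x \in A -> y \notin A ->
  exists a b, [/\ a \in A, b \notin A & e a b].
Proof.
move=> /connectP[p]; elim: p x => [|z p IHp] x /=; first by move=> _ -> ->.
case/andP=> exz ez_p y_last xA; case: (boolP (z \in A)) => [zA|zNA]; last by exists x, z.
exact: IHp ez_p y_last zA.
Qed.

Lemma homo_connect (T T' : finType) (e : rel T) (e' : rel T') (f : T -> T') :
  {homo f : x y / e x y >-> e' x y} -> {homo f : x y / connect e x y >-> connect e' x y}.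
Proof.
move=> f_homo x _ /connectP[p e_p ->]; elim: p x e_p => //= y p IHp x /andP[exy /IHp].
exact/connect_trans/connect1/f_homo.
Qed.

Definition ordered_colorings (T : finType) (e : rel T) (m : nat) (beta : seq nat)
    : {set {ffun T -> 'I_m}} :=
  [set lam : {ffun T -> 'I_m} | ordered_col e (fun v => nat_of_ord (lam v)) &&
             [forall j, #|[set v | lam v == j]| == nth 0 beta j]].

Lemma F_graphE (T : finType) (e : rel T) m beta :
  size beta = m -> F_graph e beta = #|ordered_colorings e m beta|.
Proof. by move=> <-. Qed.

Section OrderedColorings.

Variables (T : finType) (e : rel T).

Lemma eq_ordered_col (l1 l2 : T -> nat) :
  (forall u v, (l1 u < l1 v) = (l2 u < l2 v)) ->
  ordered_col e l1 = ordered_col e l2.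
Proof.
move=> lt_l12.
have eq_l12 u v : (l1 u == l1 v) = (l2 u == l2 v).
  rewrite !eqn_leq (leqNgt (l1 u)) (leqNgt (l1 v)).
  by rewrite (leqNgt (l2 u)) (leqNgt (l2 v)) !lt_l12.
have lower_l12 u : lower_rel e l1 (l1 u) =2 lower_rel e l2 (l2 u).
  by move=> a b; rewrite /lower_rel /= !lt_l12.
apply: eq_forallb => u; apply: eq_forallb => w; rewrite eq_l12 /low_path.
congr (_ ==> ~~ (_ || _)); apply: eq_existsb => x; apply: eq_existsb => y.
by rewrite !lt_l12 (eq_connect (lower_l12 u)).
Qed.

Lemma ordered_col_top_unique (lam : T -> nat) (c : nat) :
  (forall u v, connect e u v) -> ordered_col e lam -> (forall v, lam v <= c) ->
  forall u w, lam u = c -> lam w = c -> u = w.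
Proof.
move=> conn_e ord_lam le_c u w lam_u lam_w; apply/eqP/negPn/negP => neq_uw.
pose low_from_u x :=
  [exists x1, [&& e u x1, lam x1 < c & connect (lower_rel e lam c) x1 x]].
pose A := [pred x | (x == u) || (lam x < c) && low_from_u x].
have [a [b [Aa Ab eab]]] : exists a b, [/\ a \in A, b \notin A & e a b].
  apply: connect_exit (conn_e u w) _ _; first by rewrite inE eqxx.
  by rewrite inE lam_w ltnn andFb eq_sym (negbTE neq_uw).
have [low_b low_ub] : (lam b < c -> low_from_u b) /\ low_path e lam c u b.
  move: Aa; rewrite inE => /orP[/eqP au | /andP[lt_a /existsP[x1]]].
    subst a; split; last by rewrite /low_path eab.
    by move=> lt_b; apply/existsP; exists b; rewrite eab lt_b connect0.
  case/and3P=> ux1 lt_x1 conn_x1a; split.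
    move=> lt_b; apply/existsP; exists x1; rewrite ux1 lt_x1.
    by apply: connect_trans conn_x1a (connect1 _); rewrite /lower_rel /= lt_a lt_b.
  apply/orP; right; apply/existsP; exists x1; apply/existsP; exists a.
  by rewrite lt_x1 lt_a ux1 eab conn_x1a.
have lam_b : lam b = c.
  apply/eqP; rewrite eqn_leq le_c leqNgt; apply: contra Ab => lt_b.
  by rewrite inE lt_b low_b ?orbT.
have neq_ub : u != b by apply: contraNneq Ab => <-; rewrite inE eqxx.
move/forallP/(_ u)/forallP/(_ b): ord_lam.
by rewrite neq_ub lam_u lam_b eqxx low_ub.
Qed.

Lemma F_graph_cat0 (b1 b2 : seq nat) :
  F_graph e (b1 ++ 0 :: b2) = F_graph e (b1 ++ b2).
Proof.
pose m := size (b1 ++ b2).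
have size_b0 : size (b1 ++ 0 :: b2) = m.+1 by rewrite /m !size_cat addnS.
pose h : 'I_m.+1 := inord (size b1).
have h_val : nat_of_ord h = size b1 by rewrite inordK // ltnS /m size_cat leq_addr.
have nth_h : nth 0 (b1 ++ 0 :: b2) h = 0 by rewrite h_val nth_cat ltnn subnn.
have nth_lift j : nth 0 (b1 ++ 0 :: b2) (lift h j) = nth 0 (b1 ++ b2) j.
  rewrite /= /bump h_val !nth_cat; case: (leqP (size b1) j) => [le_j | lt_j].
    by rewrite add1n ltnNge (leqW le_j) /= subSn.
  by rewrite /= add0n lt_j.
pose F (l : {ffun T -> 'I_m}) := [ffun v => lift h (l v)].
have F_inj : injective F.
  move=> l1 l2 /ffunP Fl12; apply/ffunP => v; apply: (@lift_inj _ h).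
  by have := Fl12 v; rewrite !ffunE.
have ord_F l : ordered_col e (fun v => nat_of_ord (F l v)) =
               ordered_col e (fun v => nat_of_ord (l v)).
  by apply: eq_ordered_col => u v; rewrite !ffunE /= !ltnNge leq_bump2.
have card_F l j : #|[set v | F l v == lift h j]| = #|[set v | l v == j]|.
  by apply: eq_card => v; rewrite !inE ffunE (inj_eq lift_inj).
have card_Fh l : #|[set v | F l v == h]| = 0.
  apply/eqP; rewrite cards_eq0; apply/eqP/setP => v.
  by rewrite !inE ffunE eq_sym (negbTE (neq_lift _ _)).
rewrite (F_graphE _ size_b0) (F_graphE _ (erefl m)) -(card_imset _ F_inj).
apply: eq_card => lam; rewrite inE; apply/idP/imsetP.
- case/andP=> ord_lam /forallP cards_lam.
  have /fin_all_exists[f lamE] : forall v, exists j, lam v = lift h j.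
    move=> v; case: (unliftP h (lam v)) => [j ->|lam_v]; first by exists j.
    move: (cards_lam h); rewrite nth_h cards_eq0 => /eqP/setP/(_ v).
    by rewrite !inE lam_v eqxx.
  have {}lamE : lam = F (finfun f) by apply/ffunP => v; rewrite !ffunE lamE.
  move: ord_lam cards_lam; rewrite lamE ord_F => ord_f cards_f.
  exists (finfun f) => //; rewrite inE ord_f; apply/forallP => j.
  by rewrite -nth_lift -card_F cards_f.
- case=> l + ->; rewrite inE => /andP[ord_l /forallP cards_l].
  rewrite ord_F ord_l; apply/forallP => j.
  case: (unliftP h j) => [j' ->|->]; first by rewrite card_F nth_lift cards_l.
  by rewrite card_Fh nth_h.
Qed.

Lemma F_graph_filter0 (beta : seq nat) :
  F_graph e [seq a <- beta | a != 0] = F_graph e beta.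
Proof.
suff F_cat s : F_graph e (s ++ [seq a <- beta | a != 0]) = F_graph e (s ++ beta).
  exact: F_cat [::].
elim: beta s => [//|a beta IHbeta] s /=; case: (eqVneq a 0) => [->|nz_a] /=.
  by rewrite F_graph_cat0.
by rewrite -!cat_rcons IHbeta.
Qed.

Lemma F_graph_nil (x : T) : F_graph e [::] = 0.
Proof. by apply/eqP; rewrite cards_eq0; apply/eqP/setP => lam; case: (lam x). Qed.

Lemma F_graph_rcons_gt1 (t : seq nat) (a : nat) :
  (forall u v, connect e u v) -> 1 < a -> F_graph e (rcons t a) = 0.
Proof.
move=> conn_e a_gt1; rewrite (F_graphE _ (size_rcons t a)).
apply/eqP; rewrite cards_eq0; apply/eqP/setP => lam; rewrite !inE.
apply/negbTE/negP => /andP[ord_lam /forallP/(_ ord_max)/eqP].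
rewrite nth_rcons ltnn eqxx => card_top.
suff : #|[set v | lam v == ord_max]| <= 1 by rewrite card_top leqNgt a_gt1.
apply/card_le1_eqP => u w; rewrite !inE => /eqP lam_u /eqP lam_w.
apply: (ordered_col_top_unique (c := size t) conn_e ord_lam).
- by move=> v; rewrite -ltnS.
- by rewrite lam_w.
- by rewrite lam_u.
Qed.

End OrderedColorings.

Section DeleteVertex.

Variables (n : nat) (e : rel 'I_n) (i : 'I_n).

Lemma low_path_del (lam : 'I_n -> nat) c (u w : del_vertex i) :
  c <= lam i ->
  low_path (del_rel e i) (fun v => lam (val v)) c u w
  = low_path e lam c (val u) (val w).
Proof.
move=> le_ci; rewrite /low_path; congr (_ || _); apply/existsP/existsP.
  case=> x /existsP[y /and5P[lt_x lt_y ux yw conn_xy]].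
  exists (val x); apply/existsP; exists (val y); apply/and5P; split=> //.
  by apply: homo_connect conn_xy.
case=> x /existsP[y /and5P[lt_x lt_y ux yw conn_xy]].
have low_val a : lam a < c -> val (insubd u a) = a.
  by move=> lt_a; rewrite val_insubd; case: eqVneq lt_a => // ->; rewrite ltnNge le_ci.
exists (insubd u x); apply/existsP; exists (insubd u y).
apply/and5P; rewrite /del_rel !low_val //; split=> //.
apply: homo_connect conn_xy => a b /and3P[lt_a lt_b eab].
by rewrite /lower_rel /del_rel /= !low_val // lt_a lt_b.
Qed.

Lemma ordered_col_del (lam : 'I_n -> nat) :
  (forall v, v != i -> lam v < lam i) ->
  ordered_col e lam = ordered_col (del_rel e i) (fun v => lam (val v)).
Proof.
move=> lt_i; have le_i u : lam u <= lam i by case: (eqVneq u i) => [->|/lt_i/ltnW].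
have ne_i x y : x != y -> lam x = lam y -> x != i.
  move=> ne_xy eq_xy; apply/eqP => x_i; subst x.
  by have := lt_i y; rewrite eq_sym ne_xy -eq_xy ltnn => /(_ isT).
apply/forallP/forallP => ord_lam u; apply/forallP => w; apply/implyP.
  case/andP=> ne_uw /= eq_uw; rewrite low_path_del //.
  by move/forallP/(_ (val w)): (ord_lam (val u)); rewrite val_eqE ne_uw eq_uw.
case/andP=> ne_uw /eqP eq_uw.
have ne_ui : u != i := ne_i _ _ ne_uw eq_uw.
have ne_wi : w != i by apply: (ne_i w u) (esym eq_uw); rewrite eq_sym.
move/forallP/(_ (Sub w ne_wi)): (ord_lam (Sub u ne_ui)).
by rewrite -val_eqE /= ne_uw eq_uw eqxx low_path_del.
Qed.

Lemma card_class_del (lam : 'I_n -> nat) k :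
  k < lam i -> #|[set v | lam v == k]| = #|[set v : del_vertex i | lam (val v) == k]|.
Proof.
move=> lt_k; rewrite -(card_imset _ val_inj); apply: eq_card => v; rewrite inE.
apply/eqP/imsetP => [lam_v | [v' + ->]]; last by rewrite inE => /eqP.
have ne_vi : v != i by apply: contraTneq lt_k => <-; rewrite lam_v ltnn.
by exists (Sub v ne_vi); rewrite // inE lam_v.
Qed.

Lemma card_top_at (t : seq nat) :
  #|[set lam in ordered_colorings e (size t).+1 (rcons t 1) | lam i == ord_max]|
  = F_graph (del_rel e i) t.
Proof.
pose m := size t.
pose ext (l : {ffun del_vertex i -> 'I_m}) : {ffun 'I_n -> 'I_m.+1} :=
  [ffun v => if insub v is Some v' then widen_ord (leqnSn m) (l v') else ord_max].
have ext_i l : ext l i = ord_max by rewrite ffunE insubF ?eqxx.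
have ext_val l v' : nat_of_ord (ext l (val v')) = l v' by rewrite ffunE valK.
have ext_lt l v : v != i -> ext l v < m.
  by move=> ne_vi; rewrite -[v]/(val (Sub v ne_vi : del_vertex i)) ext_val.
have ext_inj : injective ext.
  move=> l1 l2 /ffunP ext12; apply/ffunP => v'; apply: ord_inj.
  by rewrite -!ext_val ext12.
have ord_ext l : ordered_col e (fun v => nat_of_ord (ext l v)) =
                 ordered_col (del_rel e i) (fun v' => nat_of_ord (l v')).
  rewrite ordered_col_del => [|v ne_vi]; last by rewrite ext_i ext_lt.
  by apply: eq_ordered_col => u w; rewrite !ext_val.
have card_ext l (j : 'I_m) :
    #|[set v | ext l v == widen_ord (leqnSn m) j]| = #|[set v' | l v' == j]|.
  transitivity #|[set v | nat_of_ord (ext l v) == j]|; first exact: eq_card.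
  rewrite (@card_class_del (fun v => nat_of_ord (ext l v)) j) ?ext_i //.
  by apply: eq_card => v'; rewrite !inE ext_val.
have class_max l : [set v | ext l v == ord_max] = [set i].
  apply/setP => v; rewrite !inE.
  case: (eqVneq v i) => [->|ne_vi]; first by rewrite ext_i eqxx.
  by rewrite -val_eqE /= ltn_eqF ?ext_lt.
rewrite (F_graphE _ (erefl m)) -(card_imset _ ext_inj).
apply: eq_card => lam; rewrite !inE; apply/idP/imsetP.
- case/andP=> /andP[ord_lam /forallP cards_lam] /eqP lam_i.
  have lam_lt v : v != i -> lam v < m.
    move=> ne_vi; move: (cards_lam ord_max); rewrite nth_rcons ltnn eqxx.
    case/cards1P=> x /setP class_x.
    have := class_x i; rewrite !inE lam_i eqxx => /esym/eqP i_x; subst x.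
    have := class_x v; rewrite !inE (negbTE ne_vi) -val_eqE /= => /negbT ne_vm.
    by rewrite ltn_neqAle ne_vm -ltnS ltn_ord.
  pose l := [ffun v' : del_vertex i => Ordinal (lam_lt _ (valP v'))].
  have lamE : lam = ext l.
    apply/ffunP => v; apply: ord_inj; case: (eqVneq v i) => [->|ne_vi].
      by rewrite ext_i lam_i.
    by rewrite -[v]/(val (Sub v ne_vi : del_vertex i)) ext_val ffunE.
  exists l => //; move: ord_lam cards_lam; rewrite lamE ord_ext => ord_l cards_l.
  rewrite inE ord_l; apply/forallP => j.
  by move: (cards_l (widen_ord (leqnSn m) j)); rewrite card_ext nth_rcons /= ltn_ord.
- case=> l + ->; rewrite inE ext_i eqxx andbT => /andP[ord_l /forallP cards_l].
  rewrite ord_ext ord_l; apply/forallP => j; case: (ltnP j m) => [lt_jm | le_mj].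
    have -> : j = widen_ord (leqnSn m) (Ordinal lt_jm) by exact: val_inj.
    by rewrite card_ext nth_rcons /= lt_jm.
  have -> : j = ord_max by apply/val_inj/eqP; rewrite eqn_leq le_mj -ltnS ltn_ord.
  by rewrite class_max cards1 nth_rcons ltnn eqxx.
Qed.

End DeleteVertex.

Lemma card_partition_unique (S I : finType) (A : {set S}) (Q : S -> I -> bool) :
  {in A, forall x, #|[set i | Q x i]| = 1} ->
  #|A| = \sum_i #|[set x in A | Q x i]|.
Proof.
move=> Q_unique; rewrite -sum1_card.
under [RHS]eq_bigr => i _ do rewrite -sum1_card big_mkcond.
rewrite [RHS]exchange_big big_mkcond; apply: eq_bigr => x _.
case: ifP => [Ax | /negbT NAx]; last by rewrite big1 // => i _; rewrite inE (negbTE NAx).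
under eq_bigr => i _ do rewrite inE Ax /=.
by rewrite -big_mkcond sum1dep_card Q_unique.
Qed.

Lemma F_graph_rcons1 n (e : rel 'I_n) (t : seq nat) :
  F_graph e (rcons t 1) = \sum_(i < n) F_graph (del_rel e i) t.
Proof.
pose top_at (lam : {ffun 'I_n -> 'I_(size t).+1}) i := lam i == ord_max.
rewrite (F_graphE _ (size_rcons t 1)) (card_partition_unique (Q := top_at)).
  by apply: eq_bigr => i _; rewrite card_top_at.
move=> lam; rewrite inE => /andP[_ /forallP/(_ ord_max)/eqP].
by rewrite nth_rcons ltnn eqxx.
Qed.

Lemma shift1_nil (G : series) beta :
  [seq a <- beta | a != 0] = [::] -> shift1 G beta = 0.
Proof. by rewrite /shift1 => ->. Qed.

Lemma shift1_rcons (G : series) beta t a :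
  [seq x <- beta | x != 0] = rcons t a ->
  shift1 G beta = if a == 1 then G t else 0.
Proof.
by rewrite /shift1 => ->; rewrite last_rcons size_rcons -cats1 take_size_cat //; case: t.
Qed.

Theorem mainTheorem15 (n : nat) (e : rel 'I_n) :
  0 < n ->
  irreflexive e -> symmetric e ->
  (forall u v : 'I_n, connect e u v) ->
  forall beta : seq nat,
    F_graph e beta = \sum_(i < n) shift1 (F_graph (del_rel e i)) beta.
Proof.
move=> n_gt0 _ _ conn_e beta; rewrite -F_graph_filter0.
case/lastP def_s: [seq a <- beta | a != 0] => [|t a].
  by rewrite (F_graph_nil _ (Ordinal n_gt0)) big1 // => i _; rewrite shift1_nil.
under eq_bigr => i _ do rewrite (shift1_rcons _ def_s).
have a_gt0 : 0 < a.
  have : a \in rcons t a by rewrite mem_rcons mem_head.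
  by rewrite -def_s mem_filter lt0n => /andP[].
case: (eqVneq a 1) => [->|ne_a1]; first exact: F_graph_rcons1.
by rewrite big1 // F_graph_rcons_gt1 // ltn_neqAle eq_sym ne_a1.
Qed.
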